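(* Let $\Gamma$ be a metric graph or a tropical curve with a real structure and let $D$ be a real divisor on $\Gamma$ with $\dim|D|\ge r\ge1$. Then for each effective real divisor $E$ on $\Gamma$ with $\deg E=r$ there exists a real divisor $D'\in|D|$ with $D'\ge E$.
   Context: A metric graph is a compact connected metric space locally isometric to star-shaped sets $\{te^{2k\pi i/n}:0\le t<r\}\subset\mathbb C$; its vertices are the points of local valence $\ne2$ and its edges the components of the complement of the vertex set. A tropical curve is the union of a metric graph and finitely many unbounded edges isometric to $[0,\infty]$, each attached at its point $0$ to the metric graph. A real structure is an isometric involution $\iota$; $\overline p=\iota(p)$. A divisor on $\Gamma$ is a finite formal $\mathbb Z$-combination $D=\sum D(p)p$ of points; $\overline D(p)=D(\overline p)$ and $D$ is real if $\overline D=D$. A rational function is a continuous $f:\Gamma\to\mathbb R$ which on each edge (identified isometrically with an interval in $[0,+\infty]$) is piecewise affine with finitely many pieces and integer slopes; $\Delta(f)(p)$ is the sum of the slopes of $f$ in all directions emanating from $p$, and $\Delta(f)=\sum_p\Delta(f)(p)p$. $D_1\sim D_2$ iff $D_2-D_1=\Delta(f)$ for a rational function $f$; $|D|=\{D'\ge0:D'\sim D\}$; $\dim|D|$ is $-1$ if $|D|=\emptyset$ and otherwise the maximal $r$ such that for each effective $E$ of degree $r$ there is $D'\in|D|$ with $D'-E\ge0$. *)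

From HB Require Import structures.
From mathcomp Require Import all_boot all_order all_algebra.
From mathcomp Require Import reals.
Set Implicit Arguments. Unset Strict Implicit. Unset Printing Implicit Defensive.
Import Order.TTheory GRing.Theory Num.Theory.
Local Open Scope ring_scope.

(* A tropical curve, given through a combinatorial model:
   a finite connected graph (vertices V, bounded edges E, possibly loops and
   multiple edges) with positive edge lengths, plus finitely many unbounded
   edges (legs) L, each isometric to [0,+oo] and attached at its point 0 to
   a vertex.  A metric graph is the case where L is empty. *)
Record tcurve (R : realType) := TCurve {
  V : finType;
  E : finType;
  L : finType;
  src : E -> V;
  tgt : E -> V;
  len : E -> R;
  len_gt0 : forall e, 0 < len e;
  leg_at : L -> V;
  tc_connected : forall u v : V,
    connect [rel x y | [exists e, ((src e == x) && (tgt e == y))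
                                   || ((src e == y) && (tgt e == x))]] u v
}.

Section Curve.
Variables (R : realType) (G : tcurve R).

(* Points: vertices, interior points (e,t) of bounded edges (0 < t < len e),
   interior points (l,t) of legs (0 < t), and the points at infinity of legs. *)
Definition pt := (V G + (E G * R) + (L G * R) + L G)%type.
Definition PV (v : V G) : pt := inl (inl (inl v)).
Definition PE (e : E G) (t : R) : pt := inl (inl (inr (e, t))).
Definition PL (l : L G) (t : R) : pt := inl (inr (l, t)).
Definition PInf (l : L G) : pt := inr l.

Definition valid (p : pt) : bool :=
  match p with
  | inl (inl (inl _)) => true
  | inl (inl (inr (e, t))) => (0 < t) && (t < len e)
  | inl (inr (_, t)) => 0 < t
  | inr _ => true
  end.

Definition edge_pt (e : E G) (t : R) : pt :=
  if t <= 0 then PV (src e) else if len e <= t then PV (tgt e) else PE e t.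
Definition leg_pt (l : L G) (t : R) : pt :=
  if t <= 0 then PV (leg_at l) else PL l t.

Definition pw_affine (g : R -> R) (a b : R) : Prop :=
  exists (n : nat) (x : nat -> R) (s : nat -> int),
    x 0%N = a /\ x n = b /\ (forall i, (i < n)%N -> x i < x i.+1) /\
    (forall i, (i < n)%N -> forall y, x i <= y <= x i.+1 ->
        g y = g (x i) + (s i)%:~R * (y - x i)).

Definition pw_affine_ray (g : R -> R) (a : R) : Prop :=
  exists (n : nat) (x : nat -> R) (s : nat -> int),
    x 0%N = a /\ (forall i, (i < n)%N -> x i < x i.+1) /\
    (forall i, (i < n)%N -> forall y, x i <= y <= x i.+1 ->
        g y = g (x i) + (s i)%:~R * (y - x i)) /\
    (forall y, x n <= y -> g y = g (x n) + (s n)%:~R * (y - x n)).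

(* rational function: continuous real valued, piecewise affine with integer
   slopes on every edge and leg (continuity at vertices is built in since
   vertices are shared points; continuity at the points at infinity is
   stated explicitly) *)
Definition rational (f : pt -> R) : Prop :=
  (forall e, pw_affine (fun t => f (edge_pt e t)) 0 (len e)) /\
  (forall l, pw_affine_ray (fun t => f (leg_pt l t)) 0 /\
     forall eps, 0 < eps -> exists M : R, forall t, M <= t ->
        `|f (leg_pt l t) - f (PInf l)| < eps).

Definition slope (f : pt -> R) (gam : R -> pt) (s : int) : Prop :=
  exists2 d : R, 0 < d & forall h, 0 < h < d -> f (gam h) = f (gam 0) + s%:~R * h.

(* slope of f at the point at infinity of leg l, in the direction pointing
   towards the finite part *)
Definition inf_slope (f : pt -> R) (l : L G) (s : int) : Prop :=
  exists M : R, forall t, M <= t ->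
    f (leg_pt l t) = f (leg_pt l M) - s%:~R * (t - M).

Definition is_lap (f : pt -> R) (D : pt -> int) : Prop :=
  (forall v : V G, exists (a b : E G -> int) (c : L G -> int),
     (forall e, src e = v -> slope f (fun h => edge_pt e h) (a e)) /\
     (forall e, tgt e = v -> slope f (fun h => edge_pt e (len e - h)) (b e)) /\
     (forall l, leg_at l = v -> slope f (fun h => leg_pt l h) (c l)) /\
     D (PV v) = \sum_(e | src e == v) a e + \sum_(e | tgt e == v) b e
                + \sum_(l | leg_at l == v) c l) /\
  (forall e t, 0 < t < len e -> exists a b : int,
     slope f (fun h => edge_pt e (t + h)) a /\
     slope f (fun h => edge_pt e (t - h)) b /\ D (PE e t) = a + b) /\
  (forall l t, 0 < t -> exists a b : int,
     slope f (fun h => leg_pt l (t + h)) a /\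
     slope f (fun h => leg_pt l (t - h)) b /\ D (PL l t) = a + b) /\
  (forall l, exists s : int, inf_slope f l s /\ D (PInf l) = s).

Definition is_div (D : pt -> int) : Prop :=
  (exists s : seq pt, forall p, D p != 0 -> p \in s) /\
  (forall p, ~~ valid p -> D p = 0).

Definition effective (D : pt -> int) : Prop := forall p, 0 <= D p.

Definition deg_is (D : pt -> int) (n : int) : Prop :=
  exists s : seq pt, [/\ uniq s, (forall p, D p != 0 -> p \in s)
                       & \sum_(p <- s) D p = n].

Definition in_linsys (D D' : pt -> int) : Prop :=
  [/\ is_div D', effective D' &
      exists f, rational f /\ is_lap f (fun p => D' p - D p)].

Definition rank_prop (D : pt -> int) (r : nat) : Prop :=
  forall Ef, is_div Ef -> effective Ef -> deg_is Ef r%:Z ->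
    exists D', in_linsys D D' /\ forall p, Ef p <= D' p.

(* dim |D| >= r  (dim |D| being -1 if |D| is empty, otherwise the maximal
   r0 with rank_prop D r0) *)
Definition dim_ge (D : pt -> int) (r : nat) : Prop :=
  (exists D', in_linsys D D') /\
  exists r0 : nat, (r <= r0)%N /\ rank_prop D r0.

End Curve.

(* A real structure: an isometric involution, given as an involutive
   length-preserving automorphism of the model (edges may be reversed). *)
Definition act_pt (R : realType) (G : tcurve R) (sV : V G -> V G)
    (sE : E G -> E G) (flip : E G -> bool) (sL : L G -> L G) (p : pt G) : pt G :=
  match p with
  | inl (inl (inl v)) => PV (sV v)
  | inl (inl (inr (e, t))) => PE (sE e) (if flip e then len e - t else t)
  | inl (inr (l, t)) => PL (sL l) t
  | inr l => PInf (sL l)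
  end.

Record real_structure (R : realType) (G : tcurve R) := RealStr {
  sV : V G -> V G;
  sE : E G -> E G;
  flip : E G -> bool;
  sL : L G -> L G;
  sE_len : forall e, len (sE e) = len e;
  sE_ends : forall e,
    if flip e then src (sE e) = sV (tgt e) /\ tgt (sE e) = sV (src e)
    else src (sE e) = sV (src e) /\ tgt (sE e) = sV (tgt e);
  sL_at : forall l, leg_at (sL l) = sV (leg_at l);
  act_invol : forall p, act_pt sV sE flip sL (act_pt sV sE flip sL p) = p
}.

Definition iota (R : realType) (G : tcurve R) (s : real_structure G) :
  pt G -> pt G := act_pt (sV s) (sE s) (flip s) (sL s).

Definition is_real (R : realType) (G : tcurve R) (s : real_structure G)
  (D : pt G -> int) : Prop := forall p, D (iota s p) = D p.

From Pilot Require Import Defs.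
From HB Require Import structures.
From mathcomp Require Import all_boot all_order all_algebra.
From mathcomp Require Import reals.
From mathcomp Require Import ring lra zify.
From Stdlib Require Import FunctionalExtensionality ClassicalEpsilon.
(* Re-import to shadow [reals.rational] by [Defs.rational]. *)
Import Defs.
Import Order.TTheory GRing.Theory Num.Theory.
Local Open Scope ring_scope.
Set Implicit Arguments. Unset Strict Implicit.

(* Take D' = D + Delta(f) in |D| with D' >= E.  Since D and E are real,
   D + Delta(f o iota) = iota(D') also lies above E.  The function
   h = max(f, f o iota) is iota-invariant, so D'' = D + Delta(h) is real; and
   wherever h agrees with f (resp. f o iota), each outgoing slope of h is at
   least that of f (resp. f o iota), so D'' >= D' (resp. D'' >= iota(D')) there.
   Hence D'' is effective and lies above E.  The hypothesis dim|D| >= r only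
   yields the rank condition for some r0 >= r, which implies it for r by
   adding r0 - r to E at a point of its support. *)

Section PiecewiseAffine.
Variable R : realType.
Implicit Types (f g : R -> R) (a b c u v y : R) (s t : int).

Definition affine_on g a c s :=
  forall y, a <= y <= c -> g y = g a + s%:~R * (y - a).

Inductive piecewise g : R -> R -> Prop :=
| piecewise_nil a : piecewise g a a
| piecewise_cons a c b s :
    a < c -> affine_on g a c s -> piecewise g c b -> piecewise g a b.

Lemma piecewise_le g a b : piecewise g a b -> a <= b.
Proof. by elim=> [//|a0 c b0 s ac _ _ cb]; rewrite (le_trans (ltW ac)). Qed.

Lemma piecewise_cat g a c b : piecewise g a c -> piecewise g c b -> piecewise g a b.
Proof. by elim=> // a0 c0 b0 s ac ha _ IH /IH; apply: piecewise_cons ac ha. Qed.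

Lemma affine_piecewise g a c s : a <= c -> affine_on g a c s -> piecewise g a c.
Proof.
rewrite le_eqVlt => /orP[/eqP -> _|ac h]; first exact: piecewise_nil.
exact: piecewise_cons ac h (piecewise_nil _ _).
Qed.

Lemma affine_onW g a c s u v :
  affine_on g a c s -> a <= u -> v <= c -> affine_on g u v s.
Proof.
move=> h au vc y /andP[uy yv].
rewrite (h y) 1?(h u); first ring; by apply/andP; split; lra.
Qed.

Lemma piecewise_split g a b c :
  piecewise g a b -> a <= c <= b -> piecewise g a c /\ piecewise g c b.
Proof.
move=> H; elim: H c => [a0|a0 c0 b0 s ac ha H IH] c /andP[h1 h2].
  have -> : c = a0 by apply/eqP; rewrite eq_le h2 h1.
  by split; apply: piecewise_nil.
have cb := piecewise_le H.
case: (lerP c c0) => cc0.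
  split; first exact: affine_piecewise h1 (affine_onW ha (lexx _) cc0).
  exact: piecewise_cat (affine_piecewise cc0 (affine_onW ha h1 (lexx _))) H.
have [] : piecewise g c0 c /\ piecewise g c b0 by apply: IH; rewrite (ltW cc0) h2.
by split=> //; apply: piecewise_cons ac ha _.
Qed.

Lemma eq_piecewise g g' a b : piecewise g a b ->
  (forall y, a <= y <= b -> g y = g' y) -> piecewise g' a b.
Proof.
elim=> [a0 _|a0 c b0 s ac ha H IH e]; first exact: piecewise_nil.
have cb := piecewise_le H.
apply: (piecewise_cons (s := s) ac); last first.
  by apply: IH => y /andP[h1 h2]; apply: e; apply/andP; split; lra.
move=> y /andP[h1 h2].
rewrite -!e; first by apply: ha; rewrite h1 h2.
all: by apply/andP; split; lra.
Qed.

Lemma pw_affineP g a b : pw_affine g a b <-> piecewise g a b.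
Proof.
split.
  case=> n; elim: n a => [|n IH] a [x [s [x0 [xn [inc h]]]]].
    by rewrite -x0 xn; exact: piecewise_nil.
  apply: (@piecewise_cons _ a (x 1%N) b (s 0%N)); first by rewrite -x0 inc.
    by move=> y hy; rewrite -x0 (h 0%N) // x0.
  apply: IH; exists (fun i => x i.+1), (fun i => s i.+1).
  by do 3!split=> //; move=> i hi; [apply: inc | apply: h].
elim=> [a0|a0 c b0 s ac ha _ [n [x [t [x0 [xn [inc h]]]]]]].
  by exists 0%N, (fun _ => a0), (fun _ => 0).
exists n.+1, (fun i => if i is j.+1 then x j else a0),
  (fun i => if i is j.+1 then t j else s).
do !split=> //; first by case=> [|i] hi //=; [rewrite x0 | apply: inc].
by case=> [|i] hi y hy /=; [apply: ha; rewrite -x0 | apply: h].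
Qed.

Lemma piecewise_reflect g m a b :
  piecewise g a b -> piecewise (fun y => g (m - y)) (m - b) (m - a).
Proof.
elim=> [a0|a0 c b0 s ac ha H IH]; first exact: piecewise_nil.
apply: piecewise_cat IH (@affine_piecewise _ _ _ (- s) _ _); first lra.
move=> y /andP[h1 h2].
rewrite (ha (m - y)) 1?(ha (m - (m - c))) ?mulrNz; first ring; by apply/andP; split; lra.
Qed.

Lemma affine_ge0 (d0 d1 k w z : R) : 0 <= d0 -> 0 <= d1 -> d1 = d0 + k * w ->
  0 <= z <= w -> 0 <= d0 + k * z.
Proof.
move=> h0 h1 e /andP[hz hzw].
have key : w * (d0 + k * z) = (w - z) * d0 + z * d1 by rewrite e; ring.
case: (ltrgtP w 0) => hw; first lra; last first.
  have -> : z = 0 by lra.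
  by rewrite mulr0 addr0.
by rewrite -(pmulr_rge0 _ hw) key addr_ge0 // mulr_ge0 // subr_ge0.
Qed.

Lemma piecewise_maxC f g a b : piecewise (f \max g) a b -> piecewise (g \max f) a b.
Proof. by move=> H; apply: (eq_piecewise H) => y _; rewrite /= maxC. Qed.

Lemma affine_max_dominated f g u v s t : u <= v -> affine_on f u v s ->
  affine_on g u v t -> g u <= f u -> g v <= f v -> piecewise (f \max g) u v.
Proof.
move=> uv hf hg hu hv; apply: (affine_piecewise (s := s) uv) => y yuv.
have vuv : u <= v <= v by rewrite uv lexx.
have gyf : g y <= f y.
  have := @affine_ge0 (f u - g u) (f v - g v) (s%:~R - t%:~R) (v - u) (y - u).
  rewrite !subr_ge0 => /(_ hu hv) H.
  have : 0 <= f u - g u + (s%:~R - t%:~R) * (y - u).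
    apply: H; first by rewrite (hf v vuv) (hg v vuv); ring.
    by case/andP: yuv => h1 h2; apply/andP; split; lra.
  rewrite (hf y yuv) (hg y yuv); lra.
by rewrite /= (max_l gyf) (max_l hu) hf.
Qed.

Lemma affine_max_piecewise_ge f g a b s t : a <= b -> affine_on f a b s ->
  affine_on g a b t -> g a <= f a -> piecewise (f \max g) a b.
Proof.
move=> ab hf hg ha.
have bab : a <= b <= b by rewrite ab lexx.
case: (lerP (g b) (f b)) => hb; first exact: affine_max_dominated hf hg ha hb.
have kp : 0 < (t%:~R - s%:~R : R).
  move: hb; rewrite (hf b bab) (hg b bab) subr_gt0; apply: contraTT; rewrite -!leNgt => ts.
  by rewrite lerD // ler_wpM2r // subr_ge0.
pose c := a + (f a - g a) / (t%:~R - s%:~R).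
have ck : (t%:~R - s%:~R) * (c - a) = f a - g a.
  by rewrite /c addrAC subrr add0r mulrC divfK // gt_eqF.
have ac : a <= c by rewrite /c lerDl; apply: divr_ge0; [rewrite subr_ge0 | exact: ltW].
have cb : c <= b.
  rewrite -subr_ge0 -(pmulr_rge0 _ kp).
  move: hb; rewrite (hf b bab) (hg b bab); lra.
clearbody c; have cab : a <= c <= b by rewrite ac cb.
have dc : f c = g c by rewrite (hf c cab) (hg c cab); lra.
apply: piecewise_cat.
  apply: affine_max_dominated ac (affine_onW hf _ cb) (affine_onW hg _ cb) ha _ => //.
  by rewrite dc.
apply: piecewise_maxC.
apply: affine_max_dominated cb (affine_onW hg ac _) (affine_onW hf ac _) _ (ltW hb) => //.
by rewrite dc.
Qed.

Lemma affine_max_piecewise f g a b s t : a <= b -> affine_on f a b s ->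
  affine_on g a b t -> piecewise (f \max g) a b.
Proof.
move=> ab hf hg; case: (lerP (g a) (f a)) => ha.
  exact: affine_max_piecewise_ge hf hg ha.
by apply: piecewise_maxC; apply: affine_max_piecewise_ge hg hf (ltW ha).
Qed.

Lemma piecewise_max_affine f g a b s : affine_on f a b s -> piecewise g a b ->
  piecewise (f \max g) a b.
Proof.
move=> + H; elim: H => [a0 _|a0 c b0 t ac hg H IH hf]; first exact: piecewise_nil.
have cb := piecewise_le H.
apply: piecewise_cat (affine_max_piecewise (ltW ac) (affine_onW hf _ cb) hg) _ => //.
exact: IH (affine_onW hf (ltW ac) _).
Qed.

Lemma piecewise_max f g a b : piecewise f a b -> piecewise g a b ->
  piecewise (f \max g) a b.
Proof.
move=> H; elim: H g => [a0 g _|a0 c b0 s ac hf H IH g Hg]; first exact: piecewise_nil.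
have cab : a0 <= c <= b0 by rewrite (ltW ac) (piecewise_le H).
have [H1 H2] := piecewise_split Hg cab.
exact: piecewise_cat (piecewise_max_affine hf H1) (IH _ H2).
Qed.

Definition affine_from g b s := forall y, b <= y -> g y = g b + s%:~R * (y - b).

Definition ray_piecewise g a := exists b s, piecewise g a b /\ affine_from g b s.

Lemma pw_affine_rayP g a : pw_affine_ray g a <-> ray_piecewise g a.
Proof.
split.
  case=> n [x [s [x0 [inc [h t]]]]]; exists (x n), (s n); split=> //.
  by apply/pw_affineP; exists n, x, s.
case=> b [t [/pw_affineP [n [x [s [x0 [xn [inc h]]]]]] ht]].
exists n, x, (fun i => if i == n then t else s i); do 2!split=> //; split.
  by move=> i hi y hy; rewrite (ltn_eqF hi); apply: h.
by rewrite eqxx xn.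
Qed.

Lemma affine_from_shift g a b B s : piecewise g a b -> affine_from g b s -> b <= B ->
  piecewise g a B /\ affine_from g B s.
Proof.
move=> H h bB; split.
  by apply: piecewise_cat H (affine_piecewise (s := s) bB _) => y /andP[+ _]; apply: h.
by move=> y By; rewrite (h y) 1?(h B) //; [ring | lra].
Qed.

Lemma affine_from_dominates f g B s1 s2 : affine_from f B s1 -> affine_from g B s2 ->
  exists2 c, B <= c & (forall y, c <= y -> g y <= f y) \/ (forall y, c <= y -> f y <= g y).
Proof.
wlog s21 : f g s1 s2 / s2 <= s1.
  move=> wlog hf hg; case: (lerP s2 s1) => hs; first exact: wlog hf hg.
  by have [c Bc [] ?] := wlog g f s2 s1 (ltW hs) hg hf; exists c => //; [right | left].
move: s21; rewrite le_eqVlt => /orP[/eqP-> hf hg | s21 hf hg].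
  exists B => //; case: (lerP (g B) (f B)) => hB; [left | right] => y By;
    rewrite (hf y By) (hg y By); lra.
have ds : 0 < (s1%:~R - s2%:~R : R) by rewrite subr_gt0 ltr_int.
exists (B + `|g B - f B| / (s1%:~R - s2%:~R)); first by rewrite lerDl divr_ge0 // ltW.
left => y cy; have By : B <= y by apply: le_trans cy; rewrite lerDl divr_ge0 // ltW.
rewrite (hf y By) (hg y By).
have : `|g B - f B| <= (s1%:~R - s2%:~R) * (y - B).
  by rewrite -ler_pdivrMl // lerBrDl mulrC.
have := ler_norm (g B - f B); lra.
Qed.

Lemma ray_piecewise_max f g a : ray_piecewise f a -> ray_piecewise g a ->
  ray_piecewise (f \max g) a.
Proof.
case=> b1 [s1 [p1 t1]] [b2 [s2 [p2 t2]]].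
set B := Num.max b1 b2.
have [P1 T1] : piecewise f a B /\ affine_from f B s1.
  by apply: affine_from_shift p1 t1 _; rewrite le_max lexx.
have [P2 T2] : piecewise g a B /\ affine_from g B s2.
  by apply: affine_from_shift p2 t2 _; rewrite le_max lexx orbT.
have [c Bc dom] := affine_from_dominates T1 T2.
have [Pf Tf] := affine_from_shift P1 T1 Bc.
have [Pg Tg] := affine_from_shift P2 T2 Bc.
have cc : c <= c := lexx c.
case: dom => [dom | dom]; [exists c, s1 | exists c, s2];
  split; try exact: piecewise_max Pf Pg; move=> y cy /=.
  by rewrite (max_l (dom y cy)) (max_l (dom c cc)) Tf.
by rewrite (max_r (dom y cy)) (max_r (dom c cc)) Tg.
Qed.

Definition locally_affine g y := exists s (d : R), 0 < d /\
  forall x, y - d < x < y + d -> g x = g y + s%:~R * (x - y).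

Lemma piecewise_locally_affine g a b : piecewise g a b ->
  exists S : seq R, forall y, a < y < b -> y \notin S -> locally_affine g y.
Proof.
elim=> [a0|a0 c b0 s ac ha H [S IH]]; first by exists [::] => y; lra.
exists (c :: S) => y /andP[h1 h2]; rewrite in_cons negb_or => /andP[yc yS].
case: (ltrgtP y c) => hyc; last by rewrite hyc eqxx in yc.
  pose d := Num.min (y - a0) (c - y).
  have [d1 d2] : d <= y - a0 /\ d <= c - y by rewrite !ge_min !lexx orbT.
  exists s, d; split => [|x /andP[hx1 hx2]]; first by rewrite lt_min; apply/andP; split; lra.
  rewrite (ha x) 1?(ha y); [ring | |]; by apply/andP; split; lra.
by apply: IH yS; apply/andP; split; lra.
Qed.

Lemma ray_locally_affine g a : ray_piecewise g a ->
  exists S : seq R, forall y, a < y -> y \notin S -> locally_affine g y.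
Proof.
case=> b [s [H hb]]; have [S hS] := piecewise_locally_affine H.
exists (b :: S) => y ay; rewrite in_cons negb_or => /andP[yb yS].
case: (ltrgtP y b) => hyb; last by rewrite hyb eqxx in yb.
  by apply: hS yS; apply/andP; split.
exists s, (y - b); split=> [|x /andP[hx1 hx2]]; first lra.
rewrite (hb x) 1?(hb y); [ring | lra | lra].
Qed.

Lemma max_dist_lt (a b c d e : R) : `|a - c| < e -> `|b - d| < e ->
  `|Num.max a b - Num.max c d| < e.
Proof.
rewrite !ltr_norml => /andP[h1 h2] /andP[h3 h4].
by case: (leP a b) => hab; case: (leP c d) => hcd; apply/andP; split; lra.
Qed.

End PiecewiseAffine.

Section Laplacian.
Variables (R : realType) (G : tcurve R).
Implicit Types (f g : pt G -> R) (p : pt G) (n : int).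

Definition lap_at f p n : Prop :=
  match p with
  | inl (inl (inl v)) => exists (a b : E G -> int) (c : L G -> int),
     (forall e, src e = v -> slope f (fun h => edge_pt e h) (a e)) /\
     (forall e, tgt e = v -> slope f (fun h => edge_pt e (len e - h)) (b e)) /\
     (forall l, leg_at l = v -> slope f (fun h => leg_pt l h) (c l)) /\
     n = \sum_(e | src e == v) a e + \sum_(e | tgt e == v) b e
                + \sum_(l | leg_at l == v) c l
  | inl (inl (inr (e, t))) => exists a b : int,
     slope f (fun h => edge_pt e (t + h)) a /\
     slope f (fun h => edge_pt e (t - h)) b /\ n = a + b
  | inl (inr (l, t)) => exists a b : int,
     slope f (fun h => leg_pt l (t + h)) a /\
     slope f (fun h => leg_pt l (t - h)) b /\ n = a + b
  | inr l => exists s : int, inf_slope f l s /\ n = s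
  end.

Lemma is_lapP f D : is_lap f D <-> forall p, valid p -> lap_at f p (D p).
Proof.
split.
  case=> [hV [hE [hL hI]]] [[[v|[e t]]|[l t]]|l] /= hv.
  - by have [a [b [c [h1 [h2 [h3 ->]]]]]] := hV v; exists a, b, c.
  - by have [a [b [h1 [h2 ->]]]] := hE e t hv; exists a, b.
  - by have [a [b [h1 [h2 ->]]]] := hL l t hv; exists a, b.
  - by have [s' [h1 ->]] := hI l; exists s'.
move=> H; split; [|split; [|split]].
- by move=> v; have [a [b [c [h1 [h2 [h3 ->]]]]]] := H (PV v) isT; exists a, b, c.
- by move=> e t ht; have [a [b [h1 [h2 ->]]]] := H (PE e t) ht; exists a, b.
- by move=> l t ht; have [a [b [h1 [h2 ->]]]] := H (PL l t) ht; exists a, b.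
- by move=> l; have [s' [h1 ->]] := H (PInf l) isT; exists s'.
Qed.

Lemma exists_lt_min (d1 d2 : R) : 0 < d1 -> 0 < d2 -> exists h : R, [/\ 0 < h, h < d1 & h < d2].
Proof.
move=> h1 h2; exists (Num.min d1 d2 / 2).
have m0 : 0 < Num.min d1 d2 by rewrite lt_min h1.
have [m1 m2] : Num.min d1 d2 <= d1 /\ Num.min d1 d2 <= d2 by rewrite !ge_min !lexx orbT.
by split; lra.
Qed.

Lemma slope_uniq f gam a b : slope f gam a -> slope f gam b -> a = b.
Proof.
case=> d1 d1p h1 [d2 d2p h2].
have [h [hp hd1 hd2]] := exists_lt_min d1p d2p.
have := h2 h; rewrite hp hd2 h1 ?hp ?hd1 // => /(_ isT) /addrI /(mulIf (lt0r_neq0 hp)).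
exact: intr_inj.
Qed.

Lemma inf_slope_uniq f l a b : inf_slope f l a -> inf_slope f l b -> a = b.
Proof.
case=> M1 h1 [M2 h2]; set M := Num.max M1 M2.
have [e1 e2] : M1 <= M /\ M2 <= M by rewrite !le_max !lexx orbT.
have [e1' e2'] : M1 <= M + 1 /\ M2 <= M + 1 by split; lra.
have := h1 _ e1; have := h1 _ e1'; have := h2 _ e2; have := h2 _ e2'.
by move=> F1 F2 F3 F4; apply: intr_inj; nra.
Qed.

Lemma lap_at_uniq f p n m : lap_at f p n -> lap_at f p m -> n = m.
Proof.
case: p => [[[v|[e t]]|[l t]]|l] /=.
- case=> a [b [c [h1 [h2 [h3 ->]]]]] [a' [b' [c' [h1' [h2' [h3' ->]]]]]].
  congr (_ + _ + _); apply: eq_bigr => x /eqP hx; apply: slope_uniq.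
  + exact: h1 x hx. + exact: h1' x hx.
  + exact: h2 x hx. + exact: h2' x hx.
  + exact: h3 x hx. + exact: h3' x hx.
- case=> a [b [h1 [h2 ->]]] [a' [b' [h1' [h2' ->]]]].
  by rewrite (slope_uniq h1 h1') (slope_uniq h2 h2').
- case=> a [b [h1 [h2 ->]]] [a' [b' [h1' [h2' ->]]]].
  by rewrite (slope_uniq h1 h1') (slope_uniq h2 h2').
- by case=> a [h1 ->] [a' [h1' ->]]; apply: inf_slope_uniq h1 h1'.
Qed.

Lemma eq_slope f f' gam gam' s : (forall h, f (gam h) = f' (gam' h)) ->
  slope f gam s -> slope f' gam' s.
Proof. by move=> e [d dp h]; exists d => // u hu; rewrite -!e; apply: h. Qed.

Lemma eq_inf_slope f f' l l' s : (forall t, f (leg_pt l t) = f' (leg_pt l' t)) ->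
  inf_slope f l s -> inf_slope f' l' s.
Proof. by move=> e [M h]; exists M => t ht; rewrite -!e; apply: h. Qed.

Lemma slope_max_ge f g gam a c : slope f gam a -> slope (f \max g) gam c ->
  g (gam 0) <= f (gam 0) -> a <= c.
Proof.
move=> [d1 d1p h1] [d2 d2p h2] hle.
have [u [up ud1 ud2]] := exists_lt_min d1p d2p.
have E1 : f (gam u) = f (gam 0) + a%:~R * u by apply: h1; rewrite up ud1.
have E2 : (f \max g) (gam u) = f (gam 0) + c%:~R * u.
  by rewrite -(max_l hle); apply: h2; rewrite up ud2.
have E3 : f (gam u) <= f (gam 0) + c%:~R * u.
  by rewrite -E2 /= le_max lexx.
rewrite -(ler_int R); nra.
Qed.

Lemma slope_max_strict f g gam a b : slope f gam a -> slope g gam b ->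
  g (gam 0) < f (gam 0) -> slope (f \max g) gam a.
Proof.
move=> [d1 d1p h1] [d2 d2p h2] hlt.
pose k : R := b%:~R - a%:~R.
pose d3 := if k <= 0 then 1 else (f (gam 0) - g (gam 0)) / k.
have d3p : 0 < d3 by rewrite /d3; case: (lerP k 0) => hk //; apply: divr_gt0 hk; rewrite subr_gt0.
exists (Num.min d1 (Num.min d2 d3)); first by rewrite !lt_min d1p d2p d3p.
move=> u /andP[up]; rewrite !lt_min => /andP[ud1 /andP[ud2 ud3]].
have E1 : f (gam u) = f (gam 0) + a%:~R * u by apply: h1; rewrite up ud1.
have E2 : g (gam u) = g (gam 0) + b%:~R * u by apply: h2; rewrite up ud2.
have gfu : g (gam u) <= f (gam u).
  rewrite E1 E2; case: (lerP k 0) => hk; first by rewrite /k in hk; nra.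
  have : k * d3 = f (gam 0) - g (gam 0) by rewrite /d3 leNgt hk /= mulrC divfK // gt_eqF.
  rewrite /k in hk *; nra.
by rewrite /= (max_l gfu) (max_l (ltW hlt)).
Qed.

Lemma slope_max f g gam a b : slope f gam a -> slope g gam b ->
  exists c, slope (f \max g) gam c.
Proof.
move=> sf sg; case: (ltrgtP (g (gam 0)) (f (gam 0))) => c0.
- by exists a; apply: slope_max_strict sf sg c0.
- exists b; apply: eq_slope (slope_max_strict sg sf c0) => h; exact: maxC.
case: sf sg => [d1 d1p h1] [d2 d2p h2].
have [d [dp dd1 dd2]] := exists_lt_min d1p d2p.
have E u : 0 < u < d -> f (gam u) = f (gam 0) + a%:~R * u /\ g (gam u) = f (gam 0) + b%:~R * u.
  case/andP=> up ud; split; first by apply: h1; rewrite up (lt_trans ud dd1).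
  by rewrite -c0; apply: h2; rewrite up (lt_trans ud dd2).
case: (leP a b) => hab; [exists b | exists a]; exists d => // u hu; have [E1 E2] := E u hu.
  have hab' : (a%:~R : R) <= b%:~R by rewrite ler_int.
  by rewrite /= E1 E2 c0 maxxx max_r // lerD2l ler_wpM2r // ltW; case/andP: hu.
have hab' : (b%:~R : R) <= a%:~R by rewrite ler_int ltW.
by rewrite /= E1 E2 c0 maxxx max_l // lerD2l ler_wpM2r // ltW; case/andP: hu.
Qed.

Lemma rational_inf_slope0 f l s : rational f -> inf_slope f l s -> s = 0.
Proof.
case=> _ /(_ l) [_ hc] [M hM].
have [M' hM'] := hc 1 ltr01.
set T := Num.max M M'.
have [e1 e2] : M <= T /\ M' <= T by rewrite !le_max !lexx orbT.
have [e3 e4] : M <= T + 2 /\ M' <= T + 2 by split; lra.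
move: (hM' _ e2) (hM' _ e4); rewrite !ltr_norml (hM _ e1) (hM _ e3).
move=> /andP[g1 g2] /andP[g3 g4].
have : s < 1 /\ -1 < s by rewrite -!(ltr_int R); split; nra.
by lia.
Qed.

Lemma edge_pt0 (e : E G) : edge_pt e 0 = PV (src e).
Proof. by rewrite /edge_pt lexx. Qed.

Lemma edge_pt_len (e : E G) : edge_pt e (len e - 0) = PV (tgt e).
Proof. by rewrite /edge_pt subr0 lexx leNgt len_gt0. Qed.

Lemma leg_pt0 (l : L G) : leg_pt l 0 = PV (leg_at l).
Proof. by rewrite /leg_pt lexx. Qed.

Lemma edge_pt_inner (e : E G) t : 0 < t < len e -> edge_pt e t = PE e t.
Proof. by case/andP=> h1 h2; rewrite /edge_pt leNgt h1 leNgt h2. Qed.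

Lemma leg_pt_inner (l : L G) t : 0 < t -> leg_pt l t = PL l t.
Proof. by move=> h; rewrite /leg_pt leNgt h. Qed.

Lemma lap_at_max_ge f g p a c : rational f -> rational (f \max g) -> valid p ->
  lap_at f p a -> lap_at (f \max g) p c -> g p <= f p -> a <= c.
Proof.
move=> rf rh; case: p => [[[v|[e t]]|[l t]]|l] /= hv.
- case=> a1 [b1 [c1 [h1 [h2 [h3 ->]]]]] [a2 [b2 [c2 [h1' [h2' [h3' ->]]]]]] hle.
  rewrite !lerD //; apply: ler_sum => x /eqP hx.
  + by apply: slope_max_ge (h1 x hx) (h1' x hx) _; rewrite /= edge_pt0 hx.
  + by apply: slope_max_ge (h2 x hx) (h2' x hx) _; rewrite /= edge_pt_len hx.
  + by apply: slope_max_ge (h3 x hx) (h3' x hx) _; rewrite /= leg_pt0 hx.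
- case=> a1 [b1 [h1 [h2 ->]]] [a2 [b2 [h1' [h2' ->]]]] hle.
  by rewrite lerD //; [apply: slope_max_ge h1 h1' _ | apply: slope_max_ge h2 h2' _];
    rewrite /= ?addr0 ?subr0 edge_pt_inner.
- case=> a1 [b1 [h1 [h2 ->]]] [a2 [b2 [h1' [h2' ->]]]] hle.
  by rewrite lerD //; [apply: slope_max_ge h1 h1' _ | apply: slope_max_ge h2 h2' _];
    rewrite /= ?addr0 ?subr0 leg_pt_inner.
- case=> a1 [h1 ->] [a2 [h2 ->]] _.
  by rewrite (rational_inf_slope0 rf h1) (rational_inf_slope0 rh h2).
Qed.

Lemma lap_at_max f g p a b : rational f -> rational g ->
  lap_at f p a -> lap_at g p b -> exists c, lap_at (f \max g) p c.
Proof.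
move=> rf rg; case: p => [[[v|[e t]]|[l t]]|l] /=.
- case=> a1 [b1 [c1 [h1 [h2 [h3 _]]]]] [a2 [b2 [c2 [h1' [h2' [h3' _]]]]]].
  have /choice [a' ha'] : forall e, exists c, src e = v ->
      slope (f \max g) (fun h => edge_pt e h) c.
    move=> e; case: (eqVneq (src e) v) => [he|/eqP he]; last by exists 0.
    by have [c hc] := slope_max (h1 e he) (h1' e he); exists c.
  have /choice [b' hb'] : forall e, exists c, tgt e = v ->
      slope (f \max g) (fun h => edge_pt e (len e - h)) c.
    move=> e; case: (eqVneq (tgt e) v) => [he|/eqP he]; last by exists 0.
    by have [c hc] := slope_max (h2 e he) (h2' e he); exists c.
  have /choice [c' hc'] : forall l, exists c, leg_at l = v ->
      slope (f \max g) (fun h => leg_pt l h) c.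
    move=> l; case: (eqVneq (leg_at l) v) => [hl|/eqP hl]; last by exists 0.
    by have [c hc] := slope_max (h3 l hl) (h3' l hl); exists c.
  by eexists; exists a', b', c'.
- case=> a1 [b1 [h1 [h2 _]]] [a2 [b2 [h1' [h2' _]]]].
  have [a' ha'] := slope_max h1 h1'; have [b' hb'] := slope_max h2 h2'.
  by exists (a' + b'), a', b'.
- case=> a1 [b1 [h1 [h2 _]]] [a2 [b2 [h1' [h2' _]]]].
  have [a' ha'] := slope_max h1 h1'; have [b' hb'] := slope_max h2 h2'.
  by exists (a' + b'), a', b'.
case=> a1 [h1 _] [a2 [h2 _]].
have z1 := rational_inf_slope0 rf h1; have z2 := rational_inf_slope0 rg h2; subst a1 a2.
case: h1 h2 => [M1 e1] [M2 e2]; exists 0, 0; split=> //.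
exists (Num.max M1 M2) => t ht.
have [t1 t2] : M1 <= t /\ M2 <= t by move: ht; rewrite ge_max => /andP[].
have [m1 m2] : M1 <= Num.max M1 M2 /\ M2 <= Num.max M1 M2 by rewrite !le_max !lexx orbT.
by rewrite /= (e1 t t1) (e1 _ m1) (e2 t t2) (e2 _ m2) !mul0r !subr0.
Qed.

Lemma rational_max f g : rational f -> rational g -> rational (f \max g).
Proof.
case=> fE fL [gE gL]; split=> [e|l].
  by apply/pw_affineP; apply: piecewise_max; apply/pw_affineP.
have [f1 f2] := fL l; have [g1 g2] := gL l; split.
  by apply/pw_affine_rayP; apply: ray_piecewise_max; apply/pw_affine_rayP.
move=> eps ep; have [M1 h1] := f2 eps ep; have [M2 h2] := g2 eps ep.
exists (Num.max M1 M2) => t; rewrite ge_max => /andP[t1 t2].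
exact: max_dist_lt (h1 t t1) (h2 t t2).
Qed.

Lemma locally_affine_lap0 h (F : R -> R) (P : R -> pt G) t a b :
  (forall u, h (P u) = F u) -> locally_affine F t ->
  slope h (fun u => P (t + u)) a -> slope h (fun u => P (t - u)) b -> a + b = 0.
Proof.
move=> eF [c [d [dp hd]]] sa sb.
have s1 : slope h (fun u => P (t + u)) c.
  exists d => // u /andP[u0 ud]; rewrite /= !eF addr0 hd; last by apply/andP; split; lra.
  by congr (_ + _); congr (_ * _); ring.
have s2 : slope h (fun u => P (t - u)) (- c).
  exists d => // u /andP[u0 ud]; rewrite /= !eF subr0 hd; last by apply/andP; split; lra.
  by rewrite mulrNz; congr (_ + _); ring.
by rewrite (slope_uniq sa s1) (slope_uniq sb s2) subrr.
Qed.

Lemma rational_lap_is_div h D : rational h -> is_lap h D ->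
  (forall p, ~~ valid p -> D p = 0) -> is_div D.
Proof.
case=> hE hL /is_lapP hD D0; split=> //.
have /choice [SE hSE] : forall e, exists S : seq R, forall t, 0 < t < len e ->
    t \notin S -> locally_affine (fun u => h (edge_pt e u)) t.
  by move=> e; apply: piecewise_locally_affine; apply/pw_affineP.
have /choice [SL hSL] : forall l, exists S : seq R, forall t, 0 < t ->
    t \notin S -> locally_affine (fun u => h (leg_pt l u)) t.
  by move=> l; apply: ray_locally_affine; apply/pw_affine_rayP; case: (hL l).
exists ([seq PV v | v <- enum (V G)] ++ [seq PInf l | l <- enum (L G)] ++
  flatten [seq [seq PE e t | t <- SE e] | e <- enum (E G)] ++
  flatten [seq [seq PL l t | t <- SL l] | l <- enum (L G)]) => p Dp.
have vp : valid p by apply: contraNT Dp => /D0 ->.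
have {hD} := hD p vp; rewrite !mem_cat.
case: p vp Dp => [[[v|[e t]]|[l t]]|l] /= vp Dp Hl.
- by rewrite map_f ?mem_enum.
- have tS : t \in SE e.
    apply: contraNT Dp => tS; apply/eqP; case: Hl => [a [b [sa [sb ->]]]].
    by apply: locally_affine_lap0 sa sb => //; apply: hSE.
  have -> // : PE e t \in flatten [seq [seq PE e t | t <- SE e] | e <- enum (E G)].
    by apply/flatten_mapP; exists e; rewrite ?mem_enum // map_f.
  by rewrite !orbT.
- have tS : t \in SL l.
    apply: contraNT Dp => tS; apply/eqP; case: Hl => [a [b [sa [sb ->]]]].
    by apply: locally_affine_lap0 sa sb => //; apply: hSL.
  have -> // : PL l t \in flatten [seq [seq PL l t | t <- SL l] | l <- enum (L G)].
    by apply/flatten_mapP; exists l; rewrite ?mem_enum // map_f.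
  by rewrite !orbT.
- by rewrite map_f ?orbT ?mem_enum.
Qed.

Lemma lap_max f g Df Dg : rational f -> rational g -> is_lap f Df -> is_lap g Dg ->
  exists2 Dh, is_lap (f \max g) Dh & forall p, ~~ valid p -> Dh p = 0.
Proof.
move=> rf rg /is_lapP lf /is_lapP lg.
have /choice [Dh hDh] : forall p, exists n, valid p -> lap_at (f \max g) p n.
  move=> p; case vp: (valid p); last by exists 0.
  by have [n hn] := lap_at_max rf rg (lf p vp) (lg p vp); exists n.
exists (fun p => if valid p then Dh p else 0).
  by apply/is_lapP => p vp; rewrite vp; apply: hDh.
by move=> p /negbTE ->.
Qed.

Lemma lap_uniq f D1 D2 p : is_lap f D1 -> is_lap f D2 -> valid p -> D1 p = D2 p.
Proof. by move=> /is_lapP h1 /is_lapP h2 vp; apply: lap_at_uniq (h1 p vp) (h2 p vp). Qed.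

Lemma lap_max_ge f g Df Dh p : rational f -> rational (f \max g) ->
  is_lap f Df -> is_lap (f \max g) Dh -> valid p -> g p <= f p -> Df p <= Dh p.
Proof.
move=> rf rh /is_lapP lf /is_lapP lh vp.
exact: lap_at_max_ge rf rh vp (lf p vp) (lh p vp).
Qed.

Lemma is_divD D1 D2 : is_div D1 -> is_div D2 -> is_div (fun p => D1 p + D2 p).
Proof.
move=> [[s1 h1] z1] [[s2 h2] z2]; split=> [|p vp]; last by rewrite z1 ?z2.
exists (s1 ++ s2) => p; rewrite mem_cat.
by case: (eqVneq (D1 p) 0) => [-> | /h1 -> //]; rewrite add0r => /h2 ->; rewrite orbT.
Qed.

End Laplacian.

Section RealStructure.
Variables (R : realType) (G : tcurve R) (s : real_structure G).
Implicit Types (f : pt G -> R) (p : pt G).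
Local Notation io := (iota s).

Lemma iotaK : involutive io.
Proof. exact: act_invol. Qed.

Lemma sE_inj : injective (sE s).
Proof. by apply: (can_inj (g := sE s)) => e; have := iotaK (PE e 0); case. Qed.

Lemma sV_inj : injective (sV s).
Proof. by apply: (can_inj (g := sV s)) => v; have := iotaK (PV v); case. Qed.

Lemma sL_inj : injective (sL s).
Proof. by apply: (can_inj (g := sL s)) => l; have := iotaK (PInf l); case. Qed.

Lemma iota_edge e t : io (edge_pt e t) =
  if flip s e then edge_pt (sE s e) (len e - t) else edge_pt (sE s e) t.
Proof.
rewrite /edge_pt sE_len; have lp := len_gt0 e.
have := sE_ends s e; case hf: (flip s e) => -[h1 h2]; last first.
  by case: ifP => _ /=; [rewrite h1 | case: ifP => _ /=; rewrite ?h2 ?hf].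
rewrite subr_le0 lerDl oppr_ge0.
case: (lerP t 0) => t0 /=.
  by rewrite ifN ?h2 // -ltNge (le_lt_trans t0).
by case: ifP => _ /=; rewrite ?h1 ?hf.
Qed.

Lemma iota_leg l t : io (leg_pt l t) = leg_pt (sL s l) t.
Proof. by rewrite /leg_pt; case: ifP => _ //=; rewrite -sL_at. Qed.

Lemma valid_iota p : valid (io p) = valid p.
Proof.
case: p => [[[v|[e t]]|[l t]]|l] //=; rewrite sE_len; case: ifP => // _.
by apply/idP/idP => /andP[h1 h2]; apply/andP; split; lra.
Qed.

Lemma vertex_sum_iota v (a b : E G -> int) (c : L G -> int) :
  \sum_(e | src e == sV s v) a e + \sum_(e | tgt e == sV s v) b e
     + \sum_(l | leg_at l == sV s v) c l =
  \sum_(e | src e == v) (if flip s e then b (sE s e) else a (sE s e))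
     + \sum_(e | tgt e == v) (if flip s e then a (sE s e) else b (sE s e))
     + \sum_(l | leg_at l == v) c (sL s l).
Proof.
congr (_ + _); last first.
  by rewrite (reindex_inj sL_inj); apply: eq_bigl => l; rewrite sL_at (inj_eq sV_inj).
rewrite !(big_mkcond (fun e => _ == _)) -!big_split (reindex_inj sE_inj) /=.
apply: eq_bigr => e _; have := sE_ends s e.
by case: (flip s e) => -[-> ->]; rewrite !(inj_eq sV_inj) // addrC.
Qed.

Lemma lap_at_iota f p n : lap_at f (io p) n -> lap_at (f \o io) p n.
Proof.
case: p => [[[v|[e t]]|[l t]]|l] /=.
- case=> a [b [c [h1 [h2 [h3 ->]]]]].
  exists (fun e => if flip s e then b (sE s e) else a (sE s e)),
    (fun e => if flip s e then a (sE s e) else b (sE s e)), (fun l => c (sL s l)).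
  split; [|split; [|split]]; last exact: vertex_sum_iota.
  + move=> e he; have := sE_ends s e; case hf: (flip s e) => -[e1 e2].
      apply: eq_slope (h2 (sE s e) _); last by rewrite e2 he.
      by move=> h /=; rewrite iota_edge hf; congr (f (edge_pt _ (_ - _))); apply: sE_len.
    apply: eq_slope (h1 (sE s e) _); last by rewrite e1 he.
    by move=> h /=; rewrite iota_edge hf.
  + move=> e he; have := sE_ends s e; case hf: (flip s e) => -[e1 e2].
      apply: eq_slope (h1 (sE s e) _); last by rewrite e1 he.
      by move=> h /=; rewrite iota_edge hf; congr (f (edge_pt _ _)); ring.
    apply: eq_slope (h2 (sE s e) _); last by rewrite e2 he.
    by move=> h /=; rewrite iota_edge hf; congr (f (edge_pt _ (_ - _))); apply: sE_len.
  + move=> l hl; apply: eq_slope (h3 (sL s l) _); last by rewrite sL_at hl.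
    by move=> h /=; rewrite iota_leg.
- case hf: (flip s e) => /=; case=> a [b [h1 [h2 ->]]].
    exists b, a; split; [|split; last by rewrite addrC].
      by apply: eq_slope h2 => h /=; rewrite iota_edge hf; congr (f (edge_pt _ _)); ring.
    by apply: eq_slope h1 => h /=; rewrite iota_edge hf; congr (f (edge_pt _ _)); ring.
  exists a, b; split; [|split=> //].
    by apply: eq_slope h1 => h /=; rewrite iota_edge hf.
  by apply: eq_slope h2 => h /=; rewrite iota_edge hf.
- case=> a [b [h1 [h2 ->]]]; exists a, b; split; [|split=> //].
    by apply: eq_slope h1 => h /=; rewrite iota_leg.
  by apply: eq_slope h2 => h /=; rewrite iota_leg.
- by case=> a [h1 ->]; exists a; split=> //; apply: eq_inf_slope h1 => t /=; rewrite iota_leg.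
Qed.

Lemma is_lap_iota f D : is_lap f D -> is_lap (f \o io) (D \o io).
Proof.
by move=> /is_lapP lf; apply/is_lapP => p vp; apply: lap_at_iota; apply: lf; rewrite valid_iota.
Qed.

Lemma rational_iota f : rational f -> rational (f \o io).
Proof.
case=> hE hL; split=> [e|l].
  have /pw_affineP := hE (sE s e); rewrite (sE_len s e) => H; apply/pw_affineP.
  case hf: (flip s e); last by apply: (eq_piecewise H) => y _ /=; rewrite iota_edge hf.
  have := piecewise_reflect (len e) H; rewrite subrr subr0 => /eq_piecewise; apply.
  by move=> y _ /=; rewrite iota_edge hf.
have -> : (fun t => (f \o io) (leg_pt l t)) = (fun t => f (leg_pt (sL s l) t)).
  by apply: functional_extensionality => t; rewrite /= iota_leg.
have [H1 H2] := hL (sL s l); split=> // eps /H2 [M hM].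
by exists M => t /hM; rewrite /= iota_leg.
Qed.

Lemma in_linsys_real_ge D D' : is_div D -> is_real s D -> in_linsys D D' ->
  exists D'', [/\ in_linsys D D'', is_real s D'' &
                  forall p, D' p <= D'' p \/ D' (io p) <= D'' p].
Proof.
move=> hD rD [[_ D'0] effD' [f [rf lf]]].
pose g := f \o io.
have rg : rational g := rational_iota rf.
have lg := is_lap_iota lf.
have [Dh lh Dh0] := lap_max rf rg lf lg.
have rh := rational_max rf rg.
have hio : (f \max g) \o io = f \max g.
  by apply: functional_extensionality => p; rewrite /= /g /= iotaK maxC.
have rDh p : Dh (io p) = Dh p.
  case vp: (valid p); last by rewrite !Dh0 ?valid_iota ?vp.
  by have := is_lap_iota lh; rewrite hio => /lap_uniq/(_ lh vp).
have ge p : D' p <= D p + Dh p \/ D' (io p) <= D p + Dh p.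
  case vp: (valid p); last by left; rewrite D'0 ?(proj2 hD) ?Dh0 ?vp.
  case: (lerP (g p) (f p)) => gf.
    by left; have := lap_max_ge rf rh lf lh vp gf; lia.
  have fgC : f \max g = g \max f.
    by apply: functional_extensionality => x; apply: maxC.
  rewrite fgC in rh lh; right.
  by have := lap_max_ge rg rh lg lh vp (ltW gf); rewrite /= rD; lia.
exists (fun p => D p + Dh p); split=> //.
- split; first exact: is_divD hD (rational_lap_is_div rh lh Dh0).
    by move=> p; case: (ge p) => /(le_trans _); apply; apply: effD'.
  exists (f \max g); split=> //.
  by congr (is_lap _ _): lh; apply: functional_extensionality => p; rewrite addrC addKr.
- by move=> p; rewrite rD rDh.
Qed.

End RealStructure.

Lemma rank_prop_le (R : realType) (G : tcurve R) (D : pt G -> int) r r0 :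
  (0 < r)%N -> (r <= r0)%N -> rank_prop D r0 -> rank_prop D r.
Proof.
move=> r_gt0 rr0 hr0 Ef [[S hS] Ef0] effE [sE [usE hsE sumE]].
have [p0 Ep0] : exists p0, Ef p0 != 0.
  apply/not_all_not_ex => /(_ _) /negP /negbNE Ef_eq0.
  move: sumE; rewrite big1_seq => [/eqP|p _]; [by rewrite eqz_nat; lia | exact/eqP].
have vp0 : valid p0 by apply: contraNT Ep0 => /Ef0 ->.
pose E' p := Ef p + (if p == p0 then (r0 - r)%N%:Z else 0).
have EfE' p : Ef p <= E' p by rewrite lerDl; case: ifP.
have hE' : is_div E'.
  split=> [|p vp]; last by rewrite /E' Ef0 //; case: (eqVneq p p0) vp => [->|_ _]; rewrite ?vp0.
  exists (p0 :: S) => p; rewrite in_cons /E'.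
  by case: (eqVneq p p0) => [-> //|_]; rewrite addr0; apply: hS.
have degE' : deg_is E' r0%:Z.
  exists sE; split=> // [p|].
    by rewrite /E'; case: (eqVneq p p0) => [-> _|_]; [apply: hsE | rewrite addr0; apply: hsE].
  rewrite big_split /= sumE (bigD1_seq p0) ?hsE //= eqxx big1 => [|p /negbTE -> //].
  by rewrite addr0 -PoszD subnKC.
have [D' [hD' E'D']] := hr0 E' hE' (fun p => le_trans (effE p) (EfE' p)) degE'.
by exists D'; split=> // p; apply: le_trans (EfE' p) (E'D' p).
Qed.

Unset Implicit Arguments.
Set Strict Implicit.

Theorem proposition6 (R : realType) (G : tcurve R) (s : real_structure G)
  (D : pt G -> int) (r : nat) :
  is_div D -> is_real s D -> (1 <= r)%N -> dim_ge D r ->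
  forall Ef : pt G -> int,
    is_div Ef -> effective Ef -> is_real s Ef -> deg_is Ef r%:Z ->
    exists D' : pt G -> int,
      [/\ in_linsys D D', is_real s D' & forall p, Ef p <= D' p].
Proof.
move=> hD rD r_gt0 [_ [r0 [rr0 hr0]]] Ef hE effE rE degE.
have [D' [hD' EfD']] := rank_prop_le r_gt0 rr0 hr0 hE effE degE.
have [D'' [linD'' rD'' geD'']] := in_linsys_real_ge hD rD hD'.
exists D''; split=> // p.
case: (geD'' p) => /(le_trans _); apply; last rewrite -(rE p); apply: EfD'.
Qed.
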